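(* Let $\vartheta_1$ be the random Fibonacci substitution, let $p\ge 0$ and let $u$ be a finite word over $\{a,b\}$. If either of the sets $\vartheta_1^p(a)\,u\,ab$ or $\vartheta_1^p(a)\,u\,ba$ contains a $\vartheta_1$-legal word, then both sets $\vartheta_1^p(a)\,\vartheta_1(u)\,ab$ and $\vartheta_1^p(a)\,\vartheta_1(u)\,\vartheta_1(b)\,ba$ contain $\vartheta_1$-legal words.
   Context: The random Fibonacci substitution is $\vartheta_1\colon a\mapsto\{ab,ba\},\ b\mapsto\{a\}$, extended to words by set concatenation $\vartheta_1(w_1\cdots w_k)=\vartheta_1(w_1)\cdots\vartheta_1(w_k)$ (with $AB=\{xy\mid x\in A,y\in B\}$, a single word being identified with the singleton set) and to sets of words by unions; $\vartheta_1^p$ is the $p$-fold iterate ($\vartheta_1^0(a)=\{a\}$). A word is $\vartheta_1$-legal if it is a subword of some element of $\vartheta_1^k(x)$ for some $k\ge0$ and letter $x$. *)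

From HB Require Import structures.
From mathcomp Require Import all_boot.
Set Implicit Arguments. Unset Strict Implicit. Unset Printing Implicit Defensive.

Inductive letter := La | Lb.
Definition letter_to_bool (x : letter) : bool := if x is La then true else false.
Definition bool_to_letter (b : bool) : letter := if b then La else Lb.
Lemma letter_boolK : cancel letter_to_bool bool_to_letter. Proof. by case. Qed.
HB.instance Definition _ := Equality.copy letter (can_type letter_boolK).

Definition word := seq letter.

Definition wset := word -> Prop.

Definition theta_letter (x : letter) : wset :=
  match x with
  | La => fun w => w = [:: La; Lb] \/ w = [:: Lb; La]
  | Lb => fun w => w = [:: La]
  end.

Definition wcat (S T : wset) : wset :=
  fun w => exists x y, S x /\ T y /\ w = x ++ y.

Definition wsingle (u : word) : wset := fun w => w = u.

Fixpoint theta_word (u : word) : wset :=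
  match u with
  | [::] => wsingle [::]
  | x :: u' => wcat (theta_letter x) (theta_word u')
  end.

Definition theta_set (S : wset) : wset :=
  fun w => exists u, S u /\ theta_word u w.

Fixpoint theta_iter (p : nat) (S : wset) : wset :=
  match p with
  | 0 => S
  | p'.+1 => theta_set (theta_iter p' S)
  end.

Definition legal (w : word) : Prop :=
  exists k x v, theta_iter k (wsingle [:: x]) v /\ infix w v.

Definition contains_legal (S : wset) : Prop := exists w, S w /\ legal w.

From mathcomp Require Import all_boot.

Set Implicit Arguments.
Unset Strict Implicit.
Unset Printing Implicit Defensive.

(* The words ab and ba have the common image aba, and more generally the
   random Fibonacci substitution is confluent: any two images of a word have
   a common image.  Applying the substitution to a legal word x u e, with
   x in theta^p(a) and e in {ab, ba}, and commuting it past theta^p (which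
   maps a to a word of theta^p(ba) = theta^p(b) theta^p(a)) yields a legal
   word s t z aba with t in theta^p(a) and z in theta(u).  Legality passes to
   factors, so t z aba and its prefix t z ab are legal; they are the required
   witnesses since theta(b) = {a}. *)

Lemma theta_word_cat v1 v2 w1 w2 :
  theta_word v1 w1 -> theta_word v2 w2 -> theta_word (v1 ++ v2) (w1 ++ w2).
Proof.
elim: v1 w1 => [|c v1 IHv] w1 /=; first by move=> ->.
move=> [x [y [Hx [Hy ->]]]] Hw2.
exists x, (y ++ w2); split => //.
by rewrite -catA; split; first exact: IHv.
Qed.

Lemma theta_word_cat_inv v1 v2 w :
  theta_word (v1 ++ v2) w ->
  exists w1 w2, [/\ w = w1 ++ w2, theta_word v1 w1 & theta_word v2 w2].
Proof.
elim: v1 w => [|c v1 IHv] w /=; first by exists [::], w.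
move=> [x [y [Hx [Hy ->]]]].
have [w1 [w2 [-> Hw1 Hw2]]] := IHv _ Hy.
by exists (x ++ w1), w2; split; [rewrite catA | exists x, w1 |].
Qed.

Lemma theta_word_total v : exists w, theta_word v w.
Proof.
elim: v => [|[] v [w Hw]]; first by exists [::].
- by exists ([:: La; Lb] ++ w), [:: La; Lb], w; split; [left |].
- by exists ([:: La] ++ w), [:: La], w.
Qed.

Lemma theta_word_ab : theta_word [:: La; Lb] [:: La; Lb; La].
Proof.
exists [:: La; Lb], [:: La]; split; first by left.
by split => //; exists [:: La], [::].
Qed.

Lemma theta_word_ba : theta_word [:: Lb; La] [:: La; Lb; La].
Proof.
exists [:: La], [:: Lb; La]; split => //; split => //.
by exists [:: Lb; La], [::]; split; first right.
Qed.

Lemma theta_letter_confluent c x y :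
  theta_letter c x -> theta_letter c y ->
  exists w, theta_word x w /\ theta_word y w.
Proof.
case: c => /= [Hx Hy | -> ->].
- exists [:: La; Lb; La].
  by case: Hx Hy => [->|->] [->|->]; split;
    first [exact: theta_word_ab | exact: theta_word_ba].
- by exists [:: La; Lb]; split; exists [:: La; Lb], [::]; split; by [left |].
Qed.

Lemma theta_word_confluent v x y :
  theta_word v x -> theta_word v y -> exists w, theta_word x w /\ theta_word y w.
Proof.
elim: v x y => [|c v IHv] x y /=; first by move=> -> ->; exists [::].
move=> [x1 [x2 [Hx1 [Hx2 ->]]]] [y1 [y2 [Hy1 [Hy2 ->]]]].
have [w1 [Hxw1 Hyw1]] := theta_letter_confluent Hx1 Hy1.
have [w2 [Hxw2 Hyw2]] := IHv _ _ Hx2 Hy2.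
by exists (w1 ++ w2); split; apply: theta_word_cat.
Qed.

Lemma theta_iter_cat_inv p v1 v2 y :
  theta_iter p (wsingle (v1 ++ v2)) y ->
  exists s t, [/\ y = s ++ t, theta_iter p (wsingle v1) s & theta_iter p (wsingle v2) t].
Proof.
elim: p y => [|p IHp] y /=; first by move=> ->; exists v1, v2.
move=> [y0 [Hy0 Hy]].
have [s0 [t0 [E Hs0 Ht0]]] := IHp _ Hy0.
rewrite E in Hy; have [s [t [-> Hs Ht]]] := theta_word_cat_inv Hy.
by exists s, t; split => //; [exists s0 | exists t0].
Qed.

Lemma theta_iter_theta_commute p v v' x :
  theta_iter p (wsingle v) x -> theta_word v v' ->
  exists y, theta_word x y /\ theta_iter p (wsingle v') y.
Proof.
elim: p x => [|p IHp] x /=; first by move=> -> Hv; exists v'.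
move=> [x0 [Hx0 Hx]] Hv.
have [y0 [Hx0y0 Hy0]] := IHp _ Hx0 Hv.
have [y [Hxy Hy0y]] := theta_word_confluent Hx Hx0y0.
by exists y; split => //; exists y0.
Qed.

Lemma legal_theta w w' : legal w -> theta_word w w' -> legal w'.
Proof.
move=> [k [x [v [Hv /infixP [l [r Ev]]]]]] Hw.
have [l' Hl] := theta_word_total l; have [r' Hr] := theta_word_total r.
exists k.+1, x, (l' ++ w' ++ r'); split; last by apply/infixP; exists l', r'.
exists v; split => //.
by rewrite Ev; apply: theta_word_cat => //; exact: theta_word_cat.
Qed.

Lemma legal_infix w v : infix w v -> legal v -> legal w.
Proof.
move=> Hwv [k [x [v' [Hv' Hvv']]]].
by exists k, x, v'; split; last exact: infix_trans Hwv Hvv'.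
Qed.

Lemma legal_theta_iter_a p u e e' x :
  theta_iter p (wsingle [:: La]) x -> theta_word e e' -> legal (x ++ u ++ e) ->
  exists t z, [/\ theta_iter p (wsingle [:: La]) t, theta_word u z & legal (t ++ z ++ e')].
Proof.
move=> Hx He Hl.
have Ha_ba : theta_word [:: La] ([:: Lb] ++ [:: La]).
  by exists [:: Lb; La], [::]; split; [right |].
have [y [Hxy Hy]] := theta_iter_theta_commute Hx Ha_ba.
have [s [t [Ey _ Ht]]] := theta_iter_cat_inv Hy.
have [z Hz] := theta_word_total u.
exists t, z; split => //.
have Hl' : legal ((s ++ t) ++ z ++ e').
  by rewrite -Ey; apply: legal_theta Hl _; apply: theta_word_cat => //; exact: theta_word_cat.
apply: legal_infix Hl'; apply/infixP; exists s, [::].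
by rewrite cats0 -catA.
Qed.

Theorem mainTheorem3 (p : nat) (u : word) :
  (contains_legal
     (wcat (theta_iter p (wsingle [:: La])) (wcat (wsingle u) (wsingle [:: La; Lb])))
   \/ contains_legal
     (wcat (theta_iter p (wsingle [:: La])) (wcat (wsingle u) (wsingle [:: Lb; La])))) ->
  contains_legal
    (wcat (theta_iter p (wsingle [:: La])) (wcat (theta_word u) (wsingle [:: La; Lb])))
  /\ contains_legal
    (wcat (theta_iter p (wsingle [:: La]))
       (wcat (theta_word u) (wcat (theta_word [:: Lb]) (wsingle [:: Lb; La])))).
Proof.
move=> Hlegal.
have [t [z [Ht Hz Hl]]] : exists t z, [/\ theta_iter p (wsingle [:: La]) t,
    theta_word u z & legal (t ++ z ++ [:: La; Lb; La])].
  case: Hlegal => [] [_ [[x [_ [Hx [[_ [_ [-> [-> ->]]]] ->]]]] Hl]].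
  - exact: legal_theta_iter_a Hx theta_word_ab Hl.
  - exact: legal_theta_iter_a Hx theta_word_ba Hl.
split.
- exists (t ++ z ++ [:: La; Lb]); split.
    by exists t, (z ++ [:: La; Lb]); split => //; split => //; exists z, [:: La; Lb].
  by apply: legal_infix Hl; apply/infixP; exists [::], [:: La]; rewrite -!catA.
- exists (t ++ z ++ [:: La] ++ [:: Lb; La]); split => //.
  exists t, (z ++ [:: La] ++ [:: Lb; La]); split => //; split => //.
  exists z, ([:: La] ++ [:: Lb; La]); split => //; split => //.
  by exists [:: La], [:: Lb; La]; split => //; exists [:: La], [::].
Qed.
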